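(* $\mathfrak{ss}_{ac}=\mathfrak d$ and dually $\mathfrak{ss}_{ac}^\perp=\mathfrak b$.
   Context: Let $\mathfrak S$ be the set of all sequences $\mathbf a=\langle a_i:i\in\omega\rangle$ of rational numbers with $a_i\to 0$. Let $[\omega]^\omega_\omega$ denote the set of infinite coinfinite subsets of $\omega$. For infinite $X\subseteq\omega$ with increasing enumeration $\langle i_n\rangle$ write $\sum_X\mathbf a$ for $\sum_n a_{i_n}$. A series is convergent if its partial sums converge to a real number; it is conditional if $\sum_{\{i:a_i>0\}}\mathbf a=\infty$ and $\sum_{\{i:a_i<0\}}\mathbf a=-\infty$; conditionally convergent if convergent and conditional; absolutely convergent if convergent and not conditional. Let $\mathfrak S_{cc}$ be the set of $\mathbf a\in\mathfrak S$ with $\sum\mathbf a$ conditionally convergent. $\mathfrak{ss}_{ac}$ is the least cardinality of a family $\mathcal X\subseteq[\omega]^\omega_\omega$ such that for every $\mathbf a\in\mathfrak S_{cc}$ there is $X\in\mathcal X$ with $\sum_X\mathbf a$ absolutely convergent; $\mathfrak{ss}_{ac}^\perp$ is the least cardinality of a family $\mathcal A\subseteq\mathfrak S_{cc}$ such that no $X\in[\omega]^\omega_\omega$ makes $\sum_X\mathbf a$ absolutely convergent for all $\mathbf a\in\mathcal A$. $\mathfrak b$ and $\mathfrak d$ are the bounding and dominating numbers. *)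

From Stdlib Require Import Reals QArith Qreals Lra Lia.
Open Scope R_scope.

Definition infinite_set (X : nat -> bool) : Prop :=
  forall n : nat, exists m : nat, (n <= m)%nat /\ X m = true.
Definition coinfinite_set (X : nat -> bool) : Prop :=
  forall n : nat, exists m : nat, (n <= m)%nat /\ X m = false.
Definition inf_coinf (X : nat -> bool) : Prop := infinite_set X /\ coinfinite_set X.

Definition enumerates (X : nat -> bool) (e : nat -> nat) : Prop :=
  (forall n, (e n < e (S n))%nat) /\ (forall i, X i = true <-> exists n, e n = i).

Definition partial_sums (b : nat -> R) (n : nat) : R := sum_f_R0 b n.

Definition convergent_series (b : nat -> R) : Prop :=
  exists l : R, Un_cv (partial_sums b) l.

Definition pos_terms (b : nat -> R) (i : nat) : R := if Rlt_dec 0 (b i) then b i else 0.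
Definition neg_terms (b : nat -> R) (i : nat) : R := if Rlt_dec (b i) 0 then b i else 0.
Definition conditional_series (b : nat -> R) : Prop :=
  cv_infty (partial_sums (pos_terms b)) /\
  cv_infty (fun n => - partial_sums (neg_terms b) n).

Definition cond_convergent (b : nat -> R) : Prop :=
  convergent_series b /\ conditional_series b.
Definition abs_convergent (b : nat -> R) : Prop :=
  convergent_series b /\ ~ conditional_series b.

Definition sub_abs_convergent (X : nat -> bool) (a : nat -> R) : Prop :=
  exists e : nat -> nat, enumerates X e /\ abs_convergent (fun n => a (e n)).

Definition rational_seq (a : nat -> R) : Prop := forall i, exists q : Q, a i = Q2R q.
Definition in_S (a : nat -> R) : Prop := rational_seq a /\ Un_cv a 0.
Definition in_Scc (a : nat -> R) : Prop := in_S a /\ cond_convergent a.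

Definition ss_ac_family (XX : (nat -> bool) -> Prop) : Prop :=
  (forall X, XX X -> inf_coinf X) /\
  (forall a, in_Scc a -> exists X, XX X /\ sub_abs_convergent X a).
Definition ss_ac_perp_family (A : (nat -> R) -> Prop) : Prop :=
  (forall a, A a -> in_Scc a) /\
  ~ (exists X, inf_coinf X /\ forall a, A a -> sub_abs_convergent X a).

Definition dominates (g f : nat -> nat) : Prop :=
  exists N, forall n, (N <= n)%nat -> (f n <= g n)%nat.
Definition dominating_family (D : (nat -> nat) -> Prop) : Prop :=
  forall f, exists g, D g /\ dominates g f.
Definition unbounded_family (B : (nat -> nat) -> Prop) : Prop :=
  ~ (exists g, forall f, B f -> dominates g f).

Definition le_card {A B : Type} (F : A -> Prop) (G : B -> Prop) : Prop :=
  exists h : A -> B, (forall x, F x -> G (h x)) /\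
    (forall x y, F x -> F y -> h x = h y -> x = y).

(* min{|F| : P F} <= min{|G| : Q G} *)
Definition charac_le {A B : Type} (P : (A -> Prop) -> Prop) (Q : (B -> Prop) -> Prop) : Prop :=
  forall G, Q G -> exists F, P F /\ le_card F G.

Definition charac_eq {A B : Type} (P : (A -> Prop) -> Prop) (Q : (B -> Prop) -> Prop) : Prop :=
  charac_le P Q /\ charac_le Q P.

From Stdlib Require Import Reals QArith Qreals Lra Lia Wf_nat.
From Stdlib Require Import Classical ClassicalEpsilon.
Open Scope R_scope.

(* If a_i -> 0, let N_a(n) be an index beyond which |a_i| <= 2^-n. Along a set whose
   increasing enumeration eventually dominates N_a the subseries has terms below 2^-n,
   hence converges absolutely. So a dominating family yields a witness family for ss_ac,
   and the functions N_a of a witness family for ss_ac^perp form an unbounded family.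

   Conversely, attach to f the rational series c_0 - c_0 + c_1 - c_1 + ..., where
   c_k = 1/(n+1) for the least n with k < F(n) := sum_{j<=n} (f j + 1). It converges
   conditionally, and c_k >= 1/(n+1) whenever k < F(n). If the enumeration e of X does
   not dominate f, then e(n) < f(n) for infinitely many n, and for each such n the terms
   of the subseries at e(0), ..., e(n) all have size at least 1/(n+1); these blocks make
   the absolute sums diverge. Hence the enumerations of the sets of a witness family for
   ss_ac dominate, and the series attached to an unbounded family witness ss_ac^perp. *)

Definition strictly_increasing (e : nat -> nat) : Prop := forall n, (e n < e (S n))%nat.

Lemma strictly_increasing_lt e : strictly_increasing e ->
  forall n m, (n < m)%nat -> (e n < e m)%nat.
Proof. intros He n m Hnm. induction Hnm; [apply He|]. specialize (He m). lia. Qed.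

Lemma strictly_increasing_le e : strictly_increasing e ->
  forall n m, (n <= m)%nat -> (e n <= e m)%nat.
Proof.
  intros He n m Hnm. apply Nat.lt_eq_cases in Hnm as [Hlt | ->]; [|lia].
  pose proof (strictly_increasing_lt e He n m Hlt). lia.
Qed.

Lemma enumerates_le X e1 e2 : enumerates X e1 -> enumerates X e2 ->
  forall n, (e1 n <= e2 n)%nat.
Proof.
  intros [Inc1 Rng1] [Inc2 Rng2] n.
  assert (Hhit : forall n, exists k, e1 k = e2 n) by (intro m; apply Rng1, Rng2; eauto).
  induction n as [|n IH].
  - destruct (Hhit 0%nat) as [k <-]. apply strictly_increasing_le; auto; lia.
  - destruct (Hhit (S n)) as [k Hk]. rewrite <- Hk. apply strictly_increasing_le; auto.
    enough (~ (k <= n)%nat) by lia. intro Hkn.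
    pose proof (strictly_increasing_le e1 Inc1 k n Hkn). specialize (Inc2 n). lia.
Qed.

Lemma enumerates_unique X e1 e2 : enumerates X e1 -> enumerates X e2 ->
  forall n, e1 n = e2 n.
Proof.
  intros H1 H2 n.
  pose proof (enumerates_le X e1 e2 H1 H2 n). pose proof (enumerates_le X e2 e1 H2 H1 n). lia.
Qed.

Definition range_set (e : nat -> nat) (i : nat) : bool :=
  if excluded_middle_informative (exists n, e n = i) then true else false.

Lemma range_set_spec e i : range_set e i = true <-> exists n, e n = i.
Proof. unfold range_set. destruct excluded_middle_informative; easy. Qed.

Lemma enumerates_range_set e : strictly_increasing e -> enumerates (range_set e) e.
Proof. intros He. split; [exact He | intro i; apply range_set_spec]. Qed.

Lemma sum_block_lb (u : nat -> R) (c : R) K d :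
  (forall k, (K < k <= K + d)%nat -> c <= u k) ->
  INR d * c <= sum_f_R0 u (K + d) - sum_f_R0 u K.
Proof.
  induction d as [|d IH]; intros Hc.
  - rewrite Nat.add_0_r. simpl. lra.
  - rewrite Nat.add_succ_r, tech5, S_INR.
    pose proof (IH (fun k Hk => Hc k ltac:(lia))).
    specialize (Hc (S (K + d)) ltac:(lia)). lra.
Qed.

Lemma sum_unbounded_of_gaps (u : nat -> R) eps : 0 < eps -> (forall k, 0 <= u k) ->
  (forall K, exists n, eps <= sum_f_R0 u n - sum_f_R0 u K) ->
  forall M, exists n, M < sum_f_R0 u n.
Proof.
  intros Heps Hu Hgap.
  assert (Hsteps : forall j, exists n, INR j * eps <= sum_f_R0 u n).
  { induction j as [|j [K HK]].
    - exists 0%nat. rewrite Rmult_0_l. apply cond_pos_sum, Hu.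
    - destruct (Hgap K) as [n Hn]. exists n. rewrite S_INR. lra. }
  intro M. destruct (INR_unbounded (M / eps)) as [j Hj].
  destruct (Hsteps j) as [n Hn]. exists n.
  assert (M = M / eps * eps) by (field; lra). nra.
Qed.

Lemma sum_unbounded_of_blocks (u : nat -> R) : (forall k, 0 <= u k) ->
  (forall K, exists n, (2 * K + 1 <= n)%nat /\
     forall k, (K < k <= n)%nat -> / INR (S n) <= u k) ->
  forall M, exists n, M < sum_f_R0 u n.
Proof.
  intros Hu Hblocks. apply (sum_unbounded_of_gaps u (/ 2)); [lra | exact Hu |].
  intro K. destruct (Hblocks K) as [n [Hn Hk]]. exists n.
  pose proof (sum_block_lb u _ K (n - K) ltac:(intros k Hk'; apply Hk; lia)) as Hsum.
  replace (K + (n - K))%nat with n in Hsum by lia.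
  rewrite minus_INR, S_INR in Hsum by lia.
  apply le_INR in Hn. rewrite plus_INR, mult_INR in Hn. simpl in Hn.
  assert (Hpos : 0 < INR n + 1) by (pose proof (pos_INR n); lra).
  set (t := / (INR n + 1)) in Hsum.
  assert (t * (INR n + 1) = 1) by (unfold t; field; lra).
  assert (0 < t) by (apply Rinv_0_lt_compat; lra).
  nra.
Qed.

Lemma sum_unbounded_of_harmonic_lb (u : nat -> R) :
  (forall k, / INR (S k) <= u k) -> forall M, exists n, M < sum_f_R0 u n.
Proof.
  intros Hu. apply sum_unbounded_of_blocks.
  - intro k. specialize (Hu k).
    assert (0 < / INR (S k)) by (apply Rinv_0_lt_compat, lt_0_INR; lia). lra.
  - intro K. exists (2 * K + 1)%nat. split; [lia|]. intros k Hk.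
    eapply Rle_trans; [|apply Hu].
    apply Rinv_le_contravar; [apply lt_0_INR | apply le_INR]; lia.
Qed.

Lemma pos_terms_add_neg_terms b i : pos_terms b i + neg_terms b i = b i.
Proof. unfold pos_terms, neg_terms. repeat destruct Rlt_dec; lra. Qed.

Lemma pos_terms_sub_neg_terms b i : pos_terms b i - neg_terms b i = Rabs (b i).
Proof. unfold pos_terms, neg_terms, Rabs. repeat destruct Rlt_dec; destruct Rcase_abs; lra. Qed.

Lemma pos_terms_le_abs b i : pos_terms b i <= Rabs (b i).
Proof. unfold pos_terms, Rabs. destruct Rlt_dec; destruct Rcase_abs; lra. Qed.

Lemma abs_sums_growing (b : nat -> R) : Un_growing (sum_f_R0 (fun k => Rabs (b k))).
Proof. intro n. rewrite tech5. pose proof (Rabs_pos (b (S n))). lra. Qed.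

Lemma conditional_of_abs_unbounded b : convergent_series b ->
  (forall M, exists n, M < sum_f_R0 (fun k => Rabs (b k)) n) -> conditional_series b.
Proof.
  intros [l Hl] Hunb.
  assert (Hdiff : forall M, exists N, forall n, (N <= n)%nat ->
    M < sum_f_R0 (fun k => Rabs (b k)) n - Rabs (partial_sums b n)).
  { intro M. destruct (Hunb (M + Rabs l + 1)) as [N1 HN1].
    destruct (Hl 1 Rlt_0_1) as [N2 HN2].
    exists (max N1 N2). intros n Hn.
    pose proof (growing_prop _ n N1 (abs_sums_growing b) ltac:(lia)).
    specialize (HN2 n ltac:(lia)). unfold Rdist in HN2.
    pose proof (Rabs_triang_inv (partial_sums b n) l). lra. }
  assert (Habs : forall n, sum_f_R0 (fun k => Rabs (b k)) n =
                 partial_sums (pos_terms b) n - partial_sums (neg_terms b) n).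
  { intro n. unfold partial_sums. rewrite <- minus_sum.
    apply sum_eq. intros. symmetry. apply pos_terms_sub_neg_terms. }
  assert (Hsum : forall n, partial_sums b n =
                 partial_sums (pos_terms b) n + partial_sums (neg_terms b) n).
  { intro n. unfold partial_sums. rewrite <- plus_sum.
    apply sum_eq. intros. symmetry. apply pos_terms_add_neg_terms. }
  split; intro M; destruct (Hdiff (2 * M)) as [N HN]; exists N; intros n Hn;
    specialize (HN n Hn); rewrite Habs, Hsum in HN;
    unfold Rabs in HN; destruct Rcase_abs in HN; lra.
Qed.

Lemma abs_convergent_of_abs_bounded b B :
  (forall n, sum_f_R0 (fun k => Rabs (b k)) n <= B) -> abs_convergent b.
Proof.
  intros HB. split.
  - assert (Habs : {l | Un_cv (sum_f_R0 (fun k => Rabs (b k))) l}).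
    { apply growing_cv; [apply abs_sums_growing|]. exists B. intros x [n ->]. apply HB. }
    destruct (cv_cauchy_2 _ (cauchy_abs _ (cv_cauchy_1 _ Habs))) as [l Hl].
    exists l. exact Hl.
  - intros [Hpos _]. destruct (Hpos B) as [N HN]. specialize (HN N (le_n N)).
    pose proof (sum_Rle (pos_terms b) _ N (fun k _ => pos_terms_le_abs b k)).
    specialize (HB N). unfold partial_sums in HN. lra.
Qed.

Lemma abs_convergent_of_eventually_geometric b N :
  (forall n, (N <= n)%nat -> Rabs (b n) <= (/ 2) ^ n) -> abs_convergent b.
Proof.
  intros HN. apply abs_convergent_of_abs_bounded with (sum_f_R0 (fun k => Rabs (b k)) N + 2).
  assert (Hgeom : forall n, sum_f_R0 (fun k => (/ 2) ^ k) n <= 2).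
  { intro n. rewrite tech3 by lra. pose proof (pow_lt (/ 2) (S n)). lra. }
  assert (Hgeom_pos : forall n, 0 <= sum_f_R0 (fun k => (/ 2) ^ k) n)
    by (intro n; apply cond_pos_sum; intro k; apply pow_le; lra).
  pose proof (fun m => growing_prop _ N m (abs_sums_growing b)) as Hmono.
  intro n. enough (sum_f_R0 (fun k => Rabs (b k)) n <=
            sum_f_R0 (fun k => Rabs (b k)) N + sum_f_R0 (fun k => (/ 2) ^ k) n)
    by (specialize (Hgeom n); lra).
  induction n as [|n IH].
  - specialize (Hmono 0%nat ltac:(lia)). specialize (Hgeom_pos 0%nat). lra.
  - destruct (Nat.le_gt_cases (S n) N) as [HnN|HnN].
    + specialize (Hmono (S n) HnN). specialize (Hgeom_pos (S n)). lra.
    + rewrite !tech5. specialize (HN (S n) ltac:(lia)). lra.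
Qed.

Fixpoint majorant (f : nat -> nat) (n : nat) : nat :=
  match n with
  | O => S (f O)
  | S m => majorant f m + S (f (S m))
  end.

Lemma majorant_gt f n : (f n < majorant f n)%nat.
Proof. destruct n; simpl; lia. Qed.

Lemma majorant_gt_id f n : (n < majorant f n)%nat.
Proof. induction n; simpl; lia. Qed.

Lemma majorant_increasing f : strictly_increasing (majorant f).
Proof. intro n. simpl. lia. Qed.

Definition level (f : nat -> nat) (k : nat) : nat :=
  epsilon (inhabits 0%nat)
    (fun n => (k < majorant f n)%nat /\ forall m, (k < majorant f m)%nat -> (n <= m)%nat).

Lemma level_spec f k : (k < majorant f (level f k))%nat /\
  forall m, (k < majorant f m)%nat -> (level f k <= m)%nat.
Proof.
  unfold level. apply epsilon_spec.
  destruct (dec_inh_nat_subset_has_unique_least_element (fun n => (k < majorant f n)%nat))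
    as [n [Hn _]].
  - intro n. apply classic.
  - exists k. apply majorant_gt_id.
  - exists n. exact Hn.
Qed.

Lemma level_le f k n : (k < majorant f n)%nat -> (level f k <= n)%nat.
Proof. apply level_spec. Qed.

Lemma level_gt f k N : (majorant f N <= k)%nat -> (N < level f k)%nat.
Proof.
  intros HNk. apply Nat.nle_gt. intro Hle.
  pose proof (strictly_increasing_le _ (majorant_increasing f) _ _ Hle).
  pose proof (proj1 (level_spec f k)). lia.
Qed.

Definition weight (f : nat -> nat) (k : nat) : R := / INR (S (level f k)).

Lemma weight_pos f k : 0 < weight f k.
Proof. apply Rinv_0_lt_compat, lt_0_INR. lia. Qed.

Lemma weight_ge f k n : (k < majorant f n)%nat -> / INR (S n) <= weight f k.
Proof.
  intros Hk. apply Rinv_le_contravar; [apply lt_0_INR; lia|].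
  apply le_INR. pose proof (level_le f k n Hk). lia.
Qed.

Lemma weight_cv0 f : Un_cv (weight f) 0.
Proof.
  intros eps Heps. destruct (archimed_cor1 eps Heps) as [N [HN HN0]].
  exists (majorant f N). intros k Hk. unfold Rdist.
  rewrite Rminus_0_r, Rabs_right by (left; apply weight_pos).
  eapply Rle_lt_trans; [|exact HN].
  apply Rinv_le_contravar; [apply lt_0_INR; lia|].
  apply le_INR. pose proof (level_gt f k N Hk). lia.
Qed.

Lemma weight_rational f k : weight f k = Q2R (1 # Pos.of_succ_nat (level f k)).
Proof.
  unfold weight, Q2R, Qnum, Qden.
  change (Z.pos (Pos.of_succ_nat (level f k))) with (Z.of_nat (S (level f k))).
  rewrite <- INR_IZR_INZ. lra.
Qed.

Definition alternate (c : nat -> R) (i : nat) : R :=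
  if Nat.even i then c (Nat.div2 i) else - c (Nat.div2 i).

Lemma alternate_double c k : alternate c (2 * k) = c k.
Proof. unfold alternate. rewrite Nat.even_even, Nat.div2_double. reflexivity. Qed.

Lemma alternate_succ_double c k : alternate c (S (2 * k)) = - c k.
Proof.
  unfold alternate. rewrite Nat.even_succ, <- Nat.negb_even, Nat.even_even, Nat.div2_succ_double.
  reflexivity.
Qed.

Lemma Rabs_alternate c i : (forall k, 0 <= c k) -> Rabs (alternate c i) = c (Nat.div2 i).
Proof.
  intros Hc. unfold alternate.
  destruct (Nat.even i); [|rewrite Rabs_Ropp]; apply Rabs_right, Rle_ge, Hc.
Qed.

Lemma sum_alternate c k :
  sum_f_R0 (alternate c) (2 * k) = c k /\ sum_f_R0 (alternate c) (S (2 * k)) = 0.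
Proof.
  induction k as [|k [_ IH]].
  - cbn. lra.
  - assert (Heven : sum_f_R0 (alternate c) (2 * S k) = c (S k)).
    { replace (2 * S k)%nat with (S (S (2 * k))) by lia. rewrite tech5, IH.
      replace (S (S (2 * k))) with (2 * S k)%nat by lia. rewrite alternate_double. lra. }
    split; [exact Heven|]. rewrite tech5, Heven, alternate_succ_double. lra.
Qed.

Lemma Rabs_sum_alternate_le c i : (forall k, 0 <= c k) ->
  Rabs (sum_f_R0 (alternate c) i) <= c (Nat.div2 i).
Proof.
  intros Hc. destruct (Nat.Even_or_Odd i) as [[k ->] | [k ->]].
  - rewrite (proj1 (sum_alternate c k)), Nat.div2_double, Rabs_right by (apply Rle_ge, Hc). lra.
  - rewrite Nat.add_1_r, (proj2 (sum_alternate c k)), Rabs_R0. apply Hc.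
Qed.

Lemma cv0_of_le_div2 (x c : nat -> R) : (forall i, Rabs (x i) <= c (Nat.div2 i)) ->
  Un_cv c 0 -> Un_cv x 0.
Proof.
  intros Hx Hc eps Heps. destruct (Hc eps Heps) as [N HN]. exists (2 * N)%nat.
  intros i Hi. unfold Rdist in *. rewrite Rminus_0_r in *.
  eapply Rle_lt_trans; [apply Hx|]. eapply Rle_lt_trans; [apply Rle_abs|].
  rewrite <- (Rminus_0_r (c _)). apply HN. pose proof (Nat.div2_odd i).
  destruct (Nat.odd i); simpl in *; lia.
Qed.

Definition slow_series (f : nat -> nat) : nat -> R := alternate (weight f).

Lemma Rabs_slow_series_ge f i n : (i < majorant f n)%nat ->
  / INR (S n) <= Rabs (slow_series f i).
Proof.
  intros Hi. unfold slow_series.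
  rewrite Rabs_alternate by (intro k; left; apply weight_pos).
  apply weight_ge. pose proof (Nat.div2_decr i i (Nat.le_succ_diag_r i)). lia.
Qed.

Lemma slow_series_in_Scc f : in_Scc (slow_series f).
Proof.
  assert (Hw : forall k, 0 <= weight f k) by (intro k; left; apply weight_pos).
  assert (Hcv : convergent_series (slow_series f)).
  { exists 0. apply (cv0_of_le_div2 _ (weight f)); [|apply weight_cv0].
    intro i. apply Rabs_sum_alternate_le, Hw. }
  split; [split|split].
  - intro i. unfold slow_series, alternate. rewrite weight_rational.
    destruct (Nat.even i); [|rewrite <- Q2R_opp]; eauto.
  - apply (cv0_of_le_div2 _ (weight f)); [|apply weight_cv0].
    intro i. unfold slow_series. rewrite Rabs_alternate by exact Hw. lra.
  - exact Hcv.
  - apply conditional_of_abs_unbounded; [exact Hcv|].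
    apply sum_unbounded_of_harmonic_lb. intro i.
    apply Rabs_slow_series_ge, majorant_gt_id.
Qed.

Lemma dominates_of_abs_convergent f e : strictly_increasing e ->
  abs_convergent (fun n => slow_series f (e n)) -> dominates e f.
Proof.
  intros He [Hcv Hncond]. apply NNPP. intro Hnd. apply Hncond.
  apply conditional_of_abs_unbounded; [exact Hcv|].
  apply sum_unbounded_of_blocks; [intro; apply Rabs_pos|]. intro K.
  assert (Hbad : exists n, (2 * K + 1 <= n)%nat /\ (e n < f n)%nat).
  { apply NNPP. intro Hnone. apply Hnd. exists (2 * K + 1)%nat. intros n Hn.
    apply Nat.nlt_ge. intro Hlt. apply Hnone. eauto. }
  destruct Hbad as [n [Hn Hen]]. exists n. split; [exact Hn|]. intros k Hk.
  apply Rabs_slow_series_ge.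
  pose proof (strictly_increasing_le e He k n ltac:(lia)). pose proof (majorant_gt f n). lia.
Qed.

Definition enum (X : nat -> bool) : nat -> nat :=
  epsilon (inhabits (fun n : nat => n)) (enumerates X).

Lemma enum_dominates X f : sub_abs_convergent X (slow_series f) -> dominates (enum X) f.
Proof.
  intros [e [He Habs]].
  assert (Henum : enumerates X (enum X)) by (unfold enum; apply epsilon_spec; eauto).
  destruct (dominates_of_abs_convergent f e (proj1 He) Habs) as [N HN].
  exists N. intros n Hn. rewrite <- (enumerates_unique X e (enum X) He Henum n). auto.
Qed.

Definition decay_index (a : nat -> R) (n : nat) : nat :=
  epsilon (inhabits 0%nat) (fun N => forall i, (N <= i)%nat -> Rabs (a i) <= (/ 2) ^ n).

Lemma decay_index_spec a n : Un_cv a 0 ->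
  forall i, (decay_index a n <= i)%nat -> Rabs (a i) <= (/ 2) ^ n.
Proof.
  intros Ha. unfold decay_index. apply epsilon_spec.
  destruct (Ha ((/ 2) ^ n) ltac:(apply pow_lt; lra)) as [N HN]. exists N.
  intros i Hi. specialize (HN i Hi). unfold Rdist in HN. rewrite Rminus_0_r in HN. lra.
Qed.

(* Doubling keeps the odd numbers out, which makes the set coinfinite. *)
Definition sparse_set (g : nat -> nat) : nat -> bool :=
  range_set (fun n => 2 * majorant g n)%nat.

Lemma inf_coinf_sparse_set g : inf_coinf (sparse_set g).
Proof.
  split; intro n.
  - exists (2 * majorant g n)%nat. split.
    + pose proof (majorant_gt_id g n). lia.
    + apply range_set_spec. eauto.
  - exists (S (2 * n)). split; [lia|].
    destruct (sparse_set g (S (2 * n))) eqn:Hodd; [|reflexivity].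
    apply range_set_spec in Hodd as [k Hk]. lia.
Qed.

Lemma sub_abs_convergent_sparse_set a g : Un_cv a 0 -> dominates g (decay_index a) ->
  sub_abs_convergent (sparse_set g) a.
Proof.
  intros Ha [N HN]. exists (fun n => 2 * majorant g n)%nat. split.
  - apply enumerates_range_set. intro n. pose proof (majorant_increasing g n). lia.
  - apply abs_convergent_of_eventually_geometric with N. intros n Hn.
    apply decay_index_spec; [exact Ha|].
    specialize (HN n Hn). pose proof (majorant_gt g n). lia.
Qed.

Definition image_of {A B : Type} (F : B -> A) (P : B -> Prop) (x : A) : Prop :=
  exists b, P b /\ x = F b.

Lemma le_card_image {A B : Type} (F : B -> A) (P : B -> Prop) :
  inhabited B -> le_card (image_of F P) P.
Proof.
  intros HB. exists (fun x => epsilon HB (fun b => P b /\ x = F b)). split.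
  - intros x Hx. exact (proj1 (epsilon_spec HB _ Hx)).
  - intros x y Hx Hy Hxy.
    rewrite (proj2 (epsilon_spec HB _ Hx)), (proj2 (epsilon_spec HB _ Hy)), Hxy.
    reflexivity.
Qed.

Theorem mainTheorem6 :
  charac_eq ss_ac_family dominating_family /\
  charac_eq ss_ac_perp_family unbounded_family.
Proof.
  split; split.
  - intros D HD. exists (image_of sparse_set D).
    split; [split | exact (le_card_image _ _ (inhabits (fun n : nat => n)))].
    + intros X [g [_ ->]]. apply inf_coinf_sparse_set.
    + intros a [[_ Ha] _]. destruct (HD (decay_index a)) as [g [Dg Hg]].
      exists (sparse_set g). split; [exists g; auto|].
      apply sub_abs_convergent_sparse_set; assumption.
  - intros XX [_ HXX]. exists (image_of enum XX).
    split; [| exact (le_card_image _ _ (inhabits (fun _ : nat => true)))].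
    intro f. destruct (HXX _ (slow_series_in_Scc f)) as [X [HX Hsub]].
    exists (enum X). split; [exists X; auto | apply enum_dominates, Hsub].
  - intros B HB. exists (image_of slow_series B).
    split; [split | exact (le_card_image _ _ (inhabits (fun n : nat => n)))].
    + intros a [f [_ ->]]. apply slow_series_in_Scc.
    + intros [X [_ HX]]. apply HB. exists (enum X). intros f Bf.
      apply enum_dominates, HX. exists f. auto.
  - intros A [HA Hperp]. exists (image_of decay_index A).
    split; [| exact (le_card_image _ _ (inhabits (fun _ : nat => 0)))].
    intros [g Hg]. apply Hperp. exists (sparse_set g). split; [apply inf_coinf_sparse_set|].
    intros a Aa. destruct (HA a Aa) as [[_ Ha] _].
    apply sub_abs_convergent_sparse_set; [exact Ha | apply Hg; exists a; auto].
Qed.
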